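(* Let $\mathcal A=(A,\le,\mathrm{app},\to,\mathsf k,\mathsf s,\Phi)$ be a full adjunction implicative ordered combinatory algebra, and let $\mathcal K=\mathcal K_{\mathcal A\bullet}$ be the abstract Krivine structure with $\Lambda=\Pi=A$, $s\perp\pi\iff s\le\pi$, $\mathrm{app}(s,t)=st$, $\mathrm{push}(s,\pi)=s\to\pi$, $\mathsf K=\mathsf k$, $\mathsf S=\mathsf s$, $\mathrm{QP}=\Phi$. Consider the preorder $(A,\sqsubseteq)$, where $a\sqsubseteq a'$ iff there is $r\in\Phi$ with $ra\le a'$, and the preorder $(\mathcal P_\bullet(A),\sqsubseteq_\bullet)$ computed in $\mathcal K$, where $C\sqsubseteq_\bullet C'$ iff there is $t\in\Phi$ with $t\le x$ for every $x\in C\to_\bullet C'$. Then these preorders are equivalent; more precisely, $\rho:\mathcal P_\bullet(A)\to A$, $\rho(C)=\inf C$, is an equivalence of preorders. Consequently the Heyting preorder $\mathcal H_{\mathcal A}$ associated to $\mathcal A$ is equivalent to the Heyting preorder $\mathcal H_{\mathcal A_{\mathcal K\bullet}}$ associated to the full adjunction implicative ordered combinatory algebra $\mathcal A_{\mathcal K\bullet}$ built from $\mathcal K$.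
   Context: A full adjunction implicative ordered combinatory algebra is an inf-complete poset $(A,\le)$ with application $ab$ monotone in both arguments, implication $a\to b$ antimonotone in the first and monotone in the second argument, elements $\mathsf k,\mathsf s$ with $\mathsf k ab\le a$, $\mathsf s abc\le ac(bc)$, such that $a\le b\to c\iff ab\le c$, and a subset $\Phi\subseteq A$ closed under application containing $\mathsf s,\mathsf k$. Its Heyting preorder $\mathcal H_{\mathcal A}$ has underlying preorder $(A,\sqsubseteq)$ as in the claim. In $\mathcal K$: polars ${}^\perp P=\{t:\forall\pi\in P,\ t\le\pi\}$, $L^\perp=\{\pi:\forall t\in L,\ t\le\pi\}$; $\overline P=({}^\perp P)^\perp$; $\widehat P=\bigcup_{\pi\in P}\overline{\{\pi\}}$; $\mathcal P_\bullet(A)=\{P\subseteq A:\widehat P=P\}$; $C\to_\bullet C'=\widehat{\{s\to\pi:s\in{}^\perp C,\pi\in C'\}}$. $\mathcal A_{\mathcal K\bullet}$ has carrier $\mathcal P_\bullet(A)$ ordered by $\supseteq$, application $P\circ_\bullet Q=\{\pi:s\to\pi'\in P\ \forall s\in{}^\perp Q,\ \pi'\in\overline{\{\pi\}}\}$, implication $\to_\bullet$, and filter $\{P\in\mathcal P_\bullet(A):\exists t\in\Phi,\ t\le P\}$; its Heyting preorder has order $Q\sqsubseteq R$ iff some $F$ in this filter has $F\circ_\bullet Q\supseteq R$, and this order coincides with $\sqsubseteq_\bullet$. A monotone map of preorders is an equivalence if it has a monotone weak inverse (compositions pointwise isomorphic to identities). *)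

Set Implicit Arguments.
Unset Strict Implicit.

Record FAIOCA := {
  car :> Type;
  le : car -> car -> Prop;
  le_refl : forall a, le a a;
  le_trans : forall a b c, le a b -> le b c -> le a c;
  le_antisym : forall a b, le a b -> le b a -> a = b;
  inf : (car -> Prop) -> car;
  inf_lb : forall (P : car -> Prop) x, P x -> le (inf P) x;
  inf_glb : forall (P : car -> Prop) y, (forall x, P x -> le y x) -> le y (inf P);
  app : car -> car -> car;
  app_mono : forall a a' b b', le a a' -> le b b' -> le (app a b) (app a' b');
  imp : car -> car -> car;
  imp_mono : forall a a' b b', le a' a -> le b b' -> le (imp a b) (imp a' b');
  kk : car;
  ss : car;
  k_ax : forall a b, le (app (app kk a) b) a;
  s_ax : forall a b c, le (app (app (app ss a) b) c) (app (app a c) (app b c));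
  adj : forall a b c, le a (imp b c) <-> le (app a b) c;
  Phi : car -> Prop;
  Phi_app : forall a b, Phi a -> Phi b -> Phi (app a b);
  Phi_k : Phi kk;
  Phi_s : Phi ss
}.

Section Krivine.
Variable A : FAIOCA.

(* Polars in the abstract Krivine structure K_{A.}: Lambda = Pi = A, s ⊥ pi iff s <= pi *)
Definition perpL (P : A -> Prop) : A -> Prop := fun t => forall pi, P pi -> le t pi.
Definition perpR (L : A -> Prop) : A -> Prop := fun pi => forall t, L t -> le t pi.
Definition bar (P : A -> Prop) : A -> Prop := perpR (perpL P).
Definition hat (P : A -> Prop) : A -> Prop :=
  fun x => exists pi, P pi /\ bar (fun y => y = pi) x.

Definition is_bullet_closed (P : A -> Prop) : Prop := forall x, hat P x <-> P x.

Definition Pb : Type := { P : A -> Prop | is_bullet_closed P }.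

Definition impb (C C' : A -> Prop) : A -> Prop :=
  hat (fun x => exists s pi, perpL C s /\ C' pi /\ x = imp s pi).

Definition sqsub (a a' : A) : Prop := exists r, Phi r /\ le (app r a) a'.

Definition sqsubb (C C' : Pb) : Prop :=
  exists t, Phi t /\ forall x, impb (proj1_sig C) (proj1_sig C') x -> le t x.

Definition rho (C : Pb) : A := inf (proj1_sig C).

Definition appb (P Q : A -> Prop) : A -> Prop :=
  fun pi => forall s, perpL Q s -> forall pi', bar (fun y => y = pi) pi' -> P (imp s pi').

Definition filterb (P : Pb) : Prop :=
  exists t, Phi t /\ forall x, proj1_sig P x -> le t x.

Definition sqsubH (Q R : Pb) : Prop :=
  exists F : Pb, filterb F /\ forall x, proj1_sig R x -> appb (proj1_sig F) (proj1_sig Q) x.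

End Krivine.

Definition preorder_equiv {X Y : Type} (RX : X -> X -> Prop) (RY : Y -> Y -> Prop)
  (f : X -> Y) : Prop :=
  (forall x x', RX x x' -> RY (f x) (f x')) /\
  exists g : Y -> X,
    (forall y y', RY y y' -> RX (g y) (g y')) /\
    (forall x, RX (g (f x)) x /\ RX x (g (f x))) /\
    (forall y, RY (f (g y)) y /\ RY y (f (g y))).

(* Every closed set C of the Krivine structure is determined, up to the
   realizability preorders, by its infimum: a realizer t of C ->. C' is, by
   the adjunction, exactly an r with r (inf C) <= pi for all pi in C', since
   inf C is the largest element of the orthogonal of C.  Conversely every a
   is the infimum of the closed principal filter {x | a <= x}, so rho has a
   section and is an equivalence.  The same adjunction argument identifies
   the Heyting preorder of A_{K.} with the pullback of ⊑ along rho. *)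

Lemma preorder_equiv_of_reflecting_section {X Y : Type}
  (RX : X -> X -> Prop) (RY : Y -> Y -> Prop) (f : X -> Y) (g : Y -> X) :
  (forall y, RY y y) ->
  (forall x x', RX x x' <-> RY (f x) (f x')) ->
  (forall y, f (g y) = y) ->
  preorder_equiv RX RY f.
Proof.
  intros RY_refl RX_iff fgK. split.
  - intros x x'. apply RX_iff.
  - exists g. split; [|split].
    + intros y y' Hy. apply RX_iff. now rewrite !fgK.
    + intro x. split; apply RX_iff; rewrite fgK; apply RY_refl.
    + intro y. rewrite fgK. split; apply RY_refl.
Qed.

Section KrivineRealizability.
Variable A : FAIOCA.

Lemma bar_singleton_ge (pi x : A) : bar (fun y => y = pi) x -> le pi x.
Proof. intro Hx. apply Hx. intros y ->. apply le_refl. Qed.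

Lemma perpL_le_inf (C : A -> Prop) (s : A) : perpL C s -> le s (inf C).
Proof. intro Hs. now apply inf_glb. Qed.

Lemma perpL_inf (C : A -> Prop) : perpL C (inf C).
Proof. intros pi Hpi. now apply inf_lb. Qed.

Lemma imp_inf_le (C : A -> Prop) (s pi : A) :
  perpL C s -> le (imp (inf C) pi) (imp s pi).
Proof. intro Hs. apply imp_mono; [now apply perpL_le_inf | apply le_refl]. Qed.

Lemma sqsub_refl (a : A) : sqsub a a.
Proof.
  exists (app (app (ss A) (kk A)) (kk A)). split.
  - apply Phi_app; [apply Phi_app|]; [apply Phi_s | apply Phi_k | apply Phi_k].
  - eapply le_trans; [apply s_ax | apply k_ax].
Qed.

Definition upset (a : A) : A -> Prop := fun x => le a x.

Lemma upset_bullet_closed (a : A) : is_bullet_closed (upset a).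
Proof.
  intro x. split.
  - intros [pi [Hpi Hx]]. eapply le_trans; [exact Hpi|]. now apply bar_singleton_ge.
  - intro Hx. exists x. split; [exact Hx|]. intros t Ht. now apply Ht.
Qed.

Definition upsetb (a : A) : Pb A := exist _ (upset a) (upset_bullet_closed a).

Lemma rho_upsetb (a : A) : rho (upsetb a) = a.
Proof.
  apply le_antisym.
  - apply inf_lb, le_refl.
  - now apply inf_glb.
Qed.

Lemma sqsubb_rho (C C' : Pb A) : sqsubb C C' <-> sqsub (rho C) (rho C').
Proof.
  destruct C as [C HC], C' as [C' HC']. unfold sqsubb, sqsub, rho; simpl.
  split.
  - intros [t [Ht t_le]]. exists t. split; [exact Ht|].
    apply inf_glb. intros pi Hpi. apply adj, t_le.
    exists (imp (inf C) pi). split.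
    + exists (inf C), pi. repeat split; [apply perpL_inf | exact Hpi].
    + intros u Hu. now apply Hu.
  - intros [r [Hr r_le]]. exists r. split; [exact Hr|].
    intros x [pi0 [[s [pi [Hs [Hpi ->]]]] Hx]].
    eapply le_trans; [|apply bar_singleton_ge; exact Hx].
    eapply le_trans; [|apply imp_inf_le; exact Hs].
    apply adj. eapply le_trans; [exact r_le|]. now apply inf_lb.
Qed.

Lemma sqsubH_rho (Q R : Pb A) : sqsubH Q R <-> sqsub (rho Q) (rho R).
Proof.
  destruct Q as [Q HQ], R as [R HR]. unfold sqsubH, sqsub, rho; simpl.
  split.
  - intros [[F HF] [[t [Ht t_le]] R_sub]]; simpl in *.
    exists t. split; [exact Ht|].
    apply inf_glb. intros pi Hpi. apply adj, t_le.
    apply (R_sub pi Hpi (inf Q)); [apply perpL_inf |].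
    intros u Hu. now apply Hu.
  - intros [r [Hr r_le]]. exists (upsetb r). split.
    + exists r. split; [exact Hr | now intros x Hx].
    + intros x Hx s Hs pi' Hpi'. unfold upset.
      eapply le_trans; [|apply imp_inf_le; exact Hs].
      apply adj. eapply le_trans; [exact r_le|].
      eapply le_trans; [apply inf_lb; exact Hx|]. now apply bar_singleton_ge.
Qed.

End KrivineRealizability.

Theorem mainTheorem14 (A : FAIOCA) :
  preorder_equiv (@sqsubb A) (@sqsub A) (@rho A) /\
  (exists f : Pb A -> A, preorder_equiv (@sqsubH A) (@sqsub A) f).
Proof.
  split; [|exists (@rho A)];
    apply preorder_equiv_of_reflecting_section with (g := @upsetb A);
    auto using sqsub_refl, sqsubb_rho, sqsubH_rho, rho_upsetb.
Qed.
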